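(* Let $A = \begin{bmatrix} B & C \\ C^T & D \end{bmatrix}$ be a real symmetric $n\times n$ matrix, where $B$ is $k\times k$ (so $C$ is $k \times (n-k)$ and $D$ is $(n-k)\times(n-k)$). Then the following are equivalent: (a) $\{1,2,\dots,k\}$ is a P-set of $A$; (b) $\operatorname{rank}(A) = \operatorname{rank}(D) + 2k$; (c) $\{x \in \mathbb{R}^k : x^T C \in \operatorname{RS}(D)\} = \{0\}$.
   Context: All matrices are real. $\operatorname{RS}(D)$ denotes the row space of $D$. For an $n\times n$ matrix $A$ and $\alpha \subseteq \{1,\dots,n\}$, $A(\alpha)$ denotes the principal submatrix obtained by deleting the rows and columns indexed by $\alpha$, and $\nu(A)$ denotes the nullity of $A$. A set $\alpha$ is a P-set of $A$ if $\nu(A(\alpha)) = \nu(A) + |\alpha|$. *)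

From HB Require Import structures.
From mathcomp Require Import all_boot all_order all_algebra.
Set Implicit Arguments. Unset Strict Implicit. Unset Printing Implicit Defensive.
Import Order.TTheory GRing.Theory Num.Theory.
Local Open Scope ring_scope.

(* Principal submatrix A(alpha): delete rows and columns indexed by alpha;
   the remaining indices ~: alpha are kept in increasing order (enum order). *)
Definition princ_del (R : Type) (n : nat) (A : 'M[R]_n) (alpha : {set 'I_n})
  : 'M[R]_#|~: alpha| :=
  \matrix_(i < #|~: alpha|, j < #|~: alpha|) A (enum_val i) (enum_val j).

Definition nullity (F : fieldType) (n : nat) (A : 'M[F]_n) : nat :=
  (n - \rank A)%N.

Definition Pset (F : fieldType) (n : nat) (A : 'M[F]_n) (alpha : {set 'I_n}) : Prop :=
  nullity (princ_del A alpha) = (nullity A + #|alpha|)%N.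

(* Deleting the leading k indices of A leaves D, so (a) says exactly that
   rank A = rank D + 2k.  Always rank A <= k + rank [C^T D] = k + rank [C; D]
   <= 2k + rank D (the middle step uses D^T = D), and the last inequality is an
   equality iff the rows of C are independent modulo RS(D), i.e. iff (c).
   Conversely (c) also makes the first inequality an equality, since a
   combination x of the rows of [B C] lying in the row space of [C^T D] has
   x C in RS(D). *)
From HB Require Import structures.
From mathcomp Require Import all_boot all_order all_algebra.
From mathcomp Require Import zify.
Import Order.TTheory GRing.Theory Num.Theory.
Local Open Scope ring_scope.

Definition lead_set k m : {set 'I_(k + m)} := [set i : 'I_(k + m) | (i < k)%N].

Section LeadingIndices.

Variables k m : nat.

Lemma map_val_enum_lead_setC : map val (enum (~: lead_set k m)) = iota k m.
Proof.
rewrite /enum_mem -enumT /=.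
rewrite (@eq_filter _ _ (preim val [pred x : nat | (k <= x)%N])); last first.
  by move=> x; rewrite /= !inE -leqNgt.
rewrite -filter_map val_enum_ord iotaD filter_cat add0n.
rewrite (@eq_in_filter _ _ pred0); last first.
  by move=> x; rewrite mem_iota add0n => /= /leq_gtF.
rewrite filter_pred0 (@eq_in_filter _ _ predT) ?filter_predT //.
by move=> x; rewrite mem_iota => /andP[].
Qed.

Lemma card_lead_setC : #|~: lead_set k m| = m.
Proof. by rewrite cardE -(size_map val) map_val_enum_lead_setC size_iota. Qed.

Lemma card_lead_set : #|lead_set k m| = k.
Proof.
have := cardsC (lead_set k m); rewrite card_lead_setC card_ord.
by move/eqP; rewrite eqn_add2r => /eqP.
Qed.

Lemma val_enum_val_lead_setC (i : 'I_#|~: lead_set k m|) :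
  val (enum_val i) = (k + i)%N.
Proof.
rewrite (enum_val_nth (enum_val i)) -(nth_map _ 0%N) -?cardE //.
rewrite map_val_enum_lead_setC nth_iota //.
by have := ltn_ord i; rewrite {2}card_lead_setC.
Qed.

Lemma princ_del_lead_block (R : Type) (B : 'M[R]_k) (C : 'M[R]_(k, m))
    (C' : 'M[R]_(m, k)) (D : 'M[R]_m) :
  let e := esym card_lead_setC in
  princ_del (block_mx B C C' D) (lead_set k m) = castmx (e, e) D.
Proof.
apply/matrixP => i j; rewrite castmxE mxE.
have enum_valE (l : 'I_#|~: lead_set k m|) :
    enum_val l = rshift k (cast_ord (esym (esym card_lead_setC)) l).
  by apply: val_inj; rewrite val_enum_val_lead_setC.
by rewrite !enum_valE block_mxEdr.
Qed.

End LeadingIndices.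

Lemma mxrank_castmx (F : fieldType) m n (e : m = n) (D : 'M[F]_m) :
  \rank (castmx (e, e) D) = \rank D.
Proof. by case: n / e; rewrite castmx_id. Qed.

Lemma Pset_lead_block {F : fieldType} {k m : nat} (B : 'M[F]_k)
    (C : 'M[F]_(k, m)) (C' : 'M[F]_(m, k)) (D : 'M[F]_m) :
  Pset (block_mx B C C' D) (lead_set k m) <->
  \rank (block_mx B C C' D) = (\rank D + 2 * k)%N.
Proof.
rewrite /Pset /nullity princ_del_lead_block mxrank_castmx.
rewrite card_lead_setC card_lead_set.
have := rank_leq_row (block_mx B C C' D); have := rank_leq_row D.
by split; lia.
Qed.

Section ColRank.

Context {F : fieldType} {p q n : nat} (X : 'M[F]_(p, n)) (Y : 'M[F]_(q, n)).

Lemma mxrank_col_mx_leq : (\rank (col_mx X Y) <= p + \rank Y)%N.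
Proof.
rewrite -addsmxE; apply: leq_trans (mxrank_adds_leqif _ _) _.
by rewrite leq_add2r rank_leq_row.
Qed.

(* Rank p + rank Y is reached iff X is row-free and its row space meets that
   of Y trivially, which together say that no nonzero combination of the rows
   of X lies in the row space of Y. *)
Lemma mxrank_col_mx_full :
  \rank (col_mx X Y) = (p + \rank Y)%N <->
  (forall y : 'rV[F]_p, (y *m X <= Y)%MS -> y = 0).
Proof.
have := mxrank_sum_cap X Y; rewrite addsmxE.
have := rank_leq_row X; split=> [full y yXY | indep].
  have freeX : row_free X by rewrite /row_free; apply/eqP; lia.
  have : \rank (X :&: Y)%MS = 0%N by lia.
  move/eqP; rewrite mxrank_eq0 => /eqP capXY0.
  apply: (row_free_inj freeX); rewrite /= mul0mx; apply/eqP.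
  by rewrite -submx0 -capXY0 sub_capmx submxMl.
have freeX : row_free X.
  by apply: inj_row_free => v vX0; apply: indep; rewrite vX0 sub0mx.
have : (X :&: Y)%MS == 0.
  rewrite -submx0; apply/rV_subP => v; rewrite sub_capmx => /andP[].
  by move=> /submxP[w ->] /indep ->; rewrite mul0mx sub0mx.
rewrite -mxrank_eq0 => /eqP; move: freeX; rewrite /row_free => /eqP; lia.
Qed.

End ColRank.

Theorem theorem2p2 (R : realFieldType) (k m : nat)
  (B : 'M[R]_k) (C : 'M[R]_(k, m)) (D : 'M[R]_m)
  (hB : B^T = B) (hD : D^T = D) :
  let A : 'M[R]_(k + m) := block_mx B C C^T D in
  [<-> Pset A [set i : 'I_(k + m) | (i < k)%N];
       \rank A = (\rank D + 2 * k)%N;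
       forall x : 'rV[R]_k, (x *m C <= D)%MS -> x = 0].
Proof.
move=> A.
have PsetA : Pset A [set i : 'I_(k + m) | (i < k)%N] <-> _ :=
  Pset_lead_block B C C^T D.
have rank_row_mx : \rank (row_mx C^T D) = \rank (col_mx C D).
  by rewrite -mxrank_tr tr_row_mx trmxK hD.
have rankA_leq : (\rank A <= k + \rank (row_mx C^T D))%N.
  exact: mxrank_col_mx_leq.
have rank_colCD_leq := mxrank_col_mx_leq C D.
split; [exact: (iffLR PsetA) | split].
- move=> rankA; apply/mxrank_col_mx_full.
  (* [set] merges copies of this rank that agree only up to conversion, which
     [lia] would treat as distinct atoms. *)
  by set r := \rank (col_mx C D) in rank_row_mx rank_colCD_leq *; lia.
- move=> indep; apply: (iffRL PsetA).
  have := proj2 (mxrank_col_mx_full C D) indep.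
  suff -> : \rank A = (k + \rank (row_mx C^T D))%N.
    by set r := \rank (col_mx C D) in rank_row_mx *; lia.
  apply/mxrank_col_mx_full => y.
  rewrite mul_mx_row => /submxP[z]; rewrite mul_mx_row => /eq_row_mx[_ yC].
  by apply: indep; rewrite yC submxMl.
Qed.
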